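(* Assume the standing setup below. For every $j$ with $2\le j\le n$, the number of nonzero entries of the change of basis matrix $C(\mathcal{B}_j,\mathcal{B}_{j-1})$ satisfies \[\nu(C(\mathcal{B}_j,\mathcal{B}_{j-1}))\le \Phi_X(G_j,G_{j-1}).\] Moreover, each column of $C(\mathcal{B}_j,\mathcal{B}_{j-1})$ has at most $K_X(G_j,G_{j-1})$ nonzero entries, so that $\nu(C(\mathcal{B}_j,\mathcal{B}_{j-1}))\le K_X(G_j,G_{j-1})\,|X|$.
   Context: For a finite group $G$, $\mathcal{R}(G)$ denotes a fixed complete set of pairwise inequivalent irreducible complex matrix representations of $G$. For a finite-dimensional $\mathbb{C}G$-module $M$ with ordered basis $\mathcal{B}$, $[g]_{\mathcal{B}}$ denotes the matrix of the action of $g$ with respect to $\mathcal{B}$; $\mathcal{B}$ is a symmetry adapted basis of $M$ with respect to $\mathcal{R}(G)$ if there is a fixed partition of the positions into consecutive blocks such that for every $g\in G$, $[g]_{\mathcal{B}}$ is block diagonal with respect to these blocks and each block equals $\rho(g)$ for some $\rho\in\mathcal{R}(G)$ depending only on the block. Standing setup: $G$ is a finite group acting on a finite set $X$; $\mathbb{C}X$ is the space of functions $X\to\mathbb{C}$ with $(g\cdot f)(x)=f(g^{-1}x)$, each $x\in X$ is identified with its indicator function, and the standard basis of $\mathbb{C}X$ is $X$ itself. For a subset $Y\subseteq X$ that is a union of orbits of a subgroup, $\mathbb{C}Y$ is regarded as a submodule of $\mathbb{C}X$. We are given a chain of subgroups $\{1\}=G_1<G_2<\cdots<G_n=G$ and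 sets $\mathcal{R}(G_1),\dots,\mathcal{R}(G_n)$ that are compatible with respect to $\mathbb{C}X$, meaning there is a basis of $\mathbb{C}X$ that is symmetry adapted with respect to $\mathcal{R}(G_i)$ (for $\mathbb{C}X$ restricted to $G_i$) for every $i$. For $1\le j\le n$, $\mathcal{B}_j$ is an orbital symmetry adapted basis with respect to $\mathcal{R}(G_1),\dots,\mathcal{R}(G_j)$: $\mathcal{B}_j$ is the disjoint union, over the $G_j$-orbits $Y\subseteq X$, of bases of $\mathbb{C}Y$, each of which is symmetry adapted with respect to $\mathcal{R}(G_i)$ for every $i\le j$; and $\mathcal{B}_1$ is the standard basis. For bases $\mathcal{B},\mathcal{B}'$ of a vector space $V$, $[v]_{\mathcal{B}}$ is the coordinate vector and $C(\mathcal{B},\mathcal{B}')$ is the matrix with $C(\mathcal{B},\mathcal{B}')[v]_{\mathcal{B}'}=[v]_{\mathcal{B}}$ for all $v$. For a matrix $A$, $\nu(A)$ is the number of nonzero entries of $A$. For subgroups $H\le K\le G$ with $K$ acting transitively on a finite set $Y$, write $\mathbb{C}Y\cong\kappa_1N_1\oplus\cdots\oplus\kappa_sN_s$ as $\mathbb{C}H$-modules where $N_1,\dots,N_s$ are a complete set of irreducible $\mathbb{C}H$-modules; set $K_Y(K,H)=\max\{\kappa_1,\dots,\kappa_s\}$ and $\Phi_Y(K,H)=\sum_{i=1}^s\kappa_i^2\dim N_i$. If $K$ acts on $X$ with orbits $X_1,\dots,X_t$, set $\Phi_X(K,H)=\sum_{i=1}^t\Phi_{X_i}(K,H)$ and $K_X(K,H)=\max_i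 K_{X_i}(K,H)$. *)

From HB Require Import structures.
From mathcomp Require Import all_boot all_order all_algebra all_fingroup all_solvable all_field all_character.
Set Implicit Arguments.
Unset Strict Implicit.
Unset Printing Implicit Defensive.
Import GRing.Theory Num.Theory.
Local Open Scope ring_scope.

Section Defs.
Variables (gT : finGroupType) (T : finType) (to : {action gT &-> T}).

(* Left action g.x := to x g^-1 (MathComp actions are right actions).
   Matrix of g on CX in the standard basis (columns = images of basis
   vectors, standard basis ordered by enum T):  g . delta_x = delta_{g.x}. *)
Definition permmx (g : gT) : 'M[algC]_#|T| :=
  \matrix_(i, j) ((to (enum_val i) g == enum_val j)%:R).

Definition repT (H : {group gT}) := {d : nat & mx_representation algC H d}.

Definition rep_at (H : {group gT}) (R : seq (repT H)) (i : 'I_(size R)) : repT H :=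
  tnth (in_tuple R) i.
Definition rdim (H : {group gT}) (R : seq (repT H)) (i : 'I_(size R)) : nat :=
  projT1 (rep_at i).
Definition rmat (H : {group gT}) (R : seq (repT H)) (g : gT) (i : 'I_(size R))
  : 'M[algC]_(rdim i) := projT2 (rep_at i) g.

Definition complete_irr_set (H : {group gT}) (R : seq (repT H)) : Prop :=
  [/\ forall i : 'I_(size R), mx_irreducible (projT2 (rep_at i)),
      forall i j : 'I_(size R), i != j ->
        ~ mx_rsim (projT2 (rep_at i)) (projT2 (rep_at j)) &
      forall d (rG : mx_representation algC H d), mx_irreducible rG ->
        exists i : 'I_(size R), mx_rsim rG (projT2 (rep_at i))].

Fixpoint bdiag (I : Type) (d : I -> nat) (A : forall i, 'M[algC]_(d i)) (s : seq I)
  : 'M[algC]_(sumn (map d s)) :=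
  match s return 'M[algC]_(sumn (map d s)) with
  | [::] => 0
  | i :: s' => block_mx (A i) 0 0 (@bdiag I d A s')
  end.

(* The columns of V (an ordered family of vectors of CX, in standard
   coordinates, spanning a CH-submodule) form a symmetry adapted family
   w.r.t. R: for every g in H the matrix [g]_V (characterized by
   permmx g *m V = V *m [g]_V) is block diagonal with blocks rho(g),
   rho in R, for a fixed block pattern s. *)
Definition sym_adapted (H : {group gT}) (R : seq (repT H)) m
    (V : 'M[algC]_(#|T|, m)) : Prop :=
  exists s : seq 'I_(size R), exists e : sumn (map (@rdim H R) s) = m,
    forall g, g \in H ->
      permmx g *m V = V *m castmx (e, e) (@bdiag _ (@rdim H R) (@rmat H R g) s).

(* CY as a subspace of CX (row space of the diagonal indicator matrix) *)
Definition CYmx (Y : {set T}) : 'M[algC]_#|T| :=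
  \matrix_(i, j) ((i == j) && (enum_val i \in Y))%:R.

Definition basis_of_CY (Y : {set T}) m (V : 'M[algC]_(#|T|, m)) : bool :=
  row_free V^T && (V^T == CYmx Y)%MS.

Definition supported_in (Y : {set T}) (v : 'cV[algC]_#|T|) : bool :=
  [forall i, (v i 0 != 0) ==> (enum_val i \in Y)].

Definition orbits (K : {group gT}) : {set {set T}} :=
  [set orbit to K x | x in [set: T]].

Definition cols_in (B : 'M[algC]_#|T|) (Y : {set T}) : seq 'I_#|T| :=
  [seq k <- enum 'I_#|T| | supported_in Y (col k B)].

Definition sub_basis (B : 'M[algC]_#|T|) (Y : {set T})
  : 'M[algC]_(#|T|, size (cols_in B Y)) :=
  mxsub id (fun i => tnth (in_tuple (cols_in B Y)) i) B.

Definition orbital_sab (Gs : nat -> {group gT}) (Rs : forall i, seq (repT (Gs i)))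
    (j : nat) (B : 'M[algC]_#|T|) : Prop :=
  [/\ B \in unitmx,
      forall k : 'I_#|T|, exists2 Y, Y \in orbits (Gs j) & supported_in Y (col k B) &
      forall Y, Y \in orbits (Gs j) ->
        basis_of_CY Y (sub_basis B Y) /\
        forall i, (1 <= i <= j)%N -> sym_adapted (Rs i) (sub_basis B Y)].

(* kap is the multiplicity vector of CY as a CH-module w.r.t. the complete set
   R of irreducibles:  CY ~= (+)_i kap_i R_i  (realized by a basis of CY in
   which H acts block diagonally with kap_i copies of R_i) *)
Definition is_mult (H : {group gT}) (R : seq (repT H)) (Y : {set T})
    (kap : 'I_(size R) -> nat) : Prop :=
  let s := flatten [seq nseq (kap i) i | i <- enum 'I_(size R)] in
  exists V : 'M[algC]_(#|T|, sumn (map (@rdim H R) s)),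
    basis_of_CY Y V /\
    forall h, h \in H -> permmx h *m V = V *m @bdiag _ (@rdim H R) (@rmat H R h) s.

Definition PhiX (K H : {group gT}) (R : seq (repT H))
    (kap : {set T} -> 'I_(size R) -> nat) : nat :=
  \sum_(Y in orbits K) \sum_(i < size R) (kap Y i) ^ 2 * rdim i.

Definition KX (K H : {group gT}) (R : seq (repT H))
    (kap : {set T} -> 'I_(size R) -> nat) : nat :=
  \max_(Y in orbits K) \max_(i < size R) kap Y i.

Definition nu m n (A : 'M[algC]_(m, n)) : nat :=
  #|[set ij : 'I_m * 'I_n | A ij.1 ij.2 != 0]|.

Definition col_nnz m n (A : 'M[algC]_(m, n)) (k : 'I_n) : nat :=
  #|[set i : 'I_m | A i k != 0]|.

(* C(B, B') with [v]_B = C(B,B') [v]_B' *)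
Definition chg (B B' : 'M[algC]_#|T|) : 'M[algC]_#|T| := invmx B *m B'.

End Defs.

(* Sort the vectors of both bases by type (Y, a, q): the G_j-orbit Y with
   CY containing the vector, and the position q inside a block rho_a of the
   G_(j-1)-adapted structure.  A vector b of B_(j-1) is column q of a copy W
   of rho_a inside CY.  Written in the G_(j-1)-adapted basis of CY taken from
   B_j, W becomes an intertwiner into a block diagonal representation, which
   by Schur's lemma only meets the q-th coordinates of the rho_a-blocks.  So
   the column of C(B_j, B_(j-1)) indexed by b is supported on the vectors of
   B_j of the type of b; there are kap_Y(a) of them, the multiplicity being
   read off the characters.  This bounds each column by K_X; and since C is
   invertible, there are at most as many columns of a given type as rows of
   that type, whence nu(C) <= sum of kap_Y(a)^2 dim rho_a = Phi_X. *)

From HB Require Import structures.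
From mathcomp Require Import all_boot all_order all_algebra all_fingroup all_solvable all_field all_character.
Import GRing.Theory Num.Theory.
Local Open Scope ring_scope.

Set Implicit Arguments.
Unset Strict Implicit.
Unset Printing Implicit Defensive.

Section Schur.
Variables (gT : finGroupType) (H : {group gT}).

Lemma mx_irr_intertwiner_free_full d1 d2 (rho : mx_representation algC H d1)
    (sig : mx_representation algC H d2) (X : 'M[algC]_(d1, d2)) :
  mx_irreducible rho -> mx_irreducible sig ->
  (forall h, h \in H -> rho h *m X = X *m sig h) -> X != 0 ->
  row_free X /\ row_full X.
Proof.
move=> /mx_irrP [_ irr1] /mx_irrP [_ irr2] hX nzX; split.
  rewrite -kermx_eq0; apply/negPn/negP => nzK.
  have modK : mxmodule rho (kermx X).
    apply/mxmoduleP => h Hh; apply/sub_kermxP.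
    by rewrite -mulmxA hX // mulmxA (sub_kermxP (submx_refl _)) mul0mx.
  have := irr1 _ modK nzK; rewrite -sub1mx => /sub_kermxP.
  by rewrite mul1mx => X0; rewrite X0 eqxx in nzX.
rewrite /row_full -(genmxE X); apply: irr2; last by rewrite -mxrank_eq0 genmxE mxrank_eq0.
rewrite (eqmx_module _ (genmxE X)); apply/mxmoduleP => h Hh.
by rewrite -hX // submxMl.
Qed.

Lemma mx_irr_intertwiner_rsim d1 d2 (rho : mx_representation algC H d1)
    (sig : mx_representation algC H d2) (X : 'M[algC]_(d1, d2)) :
  mx_irreducible rho -> mx_irreducible sig ->
  (forall h, h \in H -> rho h *m X = X *m sig h) -> X != 0 -> mx_rsim rho sig.
Proof.
move=> irr1 irr2 hX nzX.
have [fr fl] := mx_irr_intertwiner_free_full irr1 irr2 hX nzX.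
by exists X => //; move: fr fl => /eqP fr /eqP fl; rewrite -fr fl.
Qed.

(* Schur's lemma over the algebraically closed field algC: an eigenvalue c
   of X makes X - c%:M a singular intertwiner, hence zero. *)
Lemma mx_irr_cent_scalar d (rho : mx_representation algC H d) (X : 'M[algC]_d) :
  mx_irreducible rho ->
  (forall h, h \in H -> rho h *m X = X *m rho h) -> exists c, X = c%:M.
Proof.
move=> irr hX; have /mx_irrP [d_gt0 _] := irr.
have : size (char_poly X) != 1%N.
  by rewrite size_char_poly; case: d {rho irr hX X} d_gt0.
case/closed_rootP => c; rewrite -eigenvalue_root_char => /eigenvalueP [v vX nzv].
exists c; apply/eqP; rewrite -subr_eq0; apply/negP => nzXc.
have [|freeXc _] := mx_irr_intertwiner_free_full irr irr (X := X - c%:M) _ (introN idP nzXc).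
  by move=> h Hh; rewrite mulmxBl mulmxBr hX // scalar_mxC.
have : v *m (X - c%:M) = 0 *m (X - c%:M).
  by rewrite mulmxBr vX mul_mx_scalar subrr mul0mx.
by move/(row_free_inj freeXc) => v0; rewrite v0 eqxx in nzv.
Qed.

End Schur.

Lemma eqmx_intertwined_mxtrace (F : fieldType) p m1 m2 (P : 'M[F]_p)
    (V1 : 'M[F]_(p, m1)) (V2 : 'M[F]_(p, m2)) A1 A2 :
  row_free V1^T -> row_free V2^T -> (V1^T == V2^T)%MS ->
  P *m V1 = V1 *m A1 -> P *m V2 = V2 *m A2 -> \tr A1 = \tr A2.
Proof.
move=> free1 free2 /andP [s12 s21] hV1 hV2.
have [Q1 eQ1] := submxP s21; have [Q2 eQ2] := submxP s12.
have eV2 : V2 = V1 *m Q1^T by rewrite -[V2]trmxK eQ1 trmx_mul trmxK.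
have eV1 : V1 = V2 *m Q2^T by rewrite -[V1]trmxK eQ2 trmx_mul trmxK.
have cancel_free m k (V : 'M[F]_(p, m)) (X Y : 'M[F]_(m, k)) :
    row_free V^T -> V *m X = V *m Y -> X = Y.
  move=> freeV eXY; apply: trmx_inj; apply: (row_free_inj freeV).
  by rewrite -!trmx_mul eXY.
have QQ1 : Q1^T *m Q2^T = 1%:M.
  by apply: (cancel_free _ _ V1) => //; rewrite mulmxA -eV2 -eV1 mulmx1.
have QQ2 : Q2^T *m Q1^T = 1%:M.
  by apply: (cancel_free _ _ V2) => //; rewrite mulmxA -eV1 -eV2 mulmx1.
have A1Q1 : A1 *m Q1^T = Q1^T *m A2.
  by apply: (cancel_free _ _ V1) => //; rewrite mulmxA -hV1 -mulmxA -eV2 hV2 eV2 mulmxA.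
by rewrite -[A1]mulmx1 -QQ1 mulmxA A1Q1 -mulmxA mxtrace_mulC -mulmxA QQ2 mulmx1.
Qed.

Section BlockPattern.
Variables (gT : finGroupType) (H : {group gT}) (R : seq (repT H)).
Local Notation rd := (@rdim _ H R).
Local Notation rm := (@rmat _ H R).

(* The block of [bdiag _ s] containing coordinate u, with the offset of u
   inside it; None past the last block. *)
Fixpoint bdiag_pos (s : seq 'I_(size R)) (u : nat) : option ('I_(size R) * nat) :=
  match s with
  | [::] => None
  | i :: s' => if (u < rd i)%N then Some (i, u) else bdiag_pos s' (u - rd i)
  end.

Lemma sum_bdiag_pos (s : seq 'I_(size R)) (F : option ('I_(size R) * nat) -> nat) :
  (\sum_(u < sumn (map rd s)) F (bdiag_pos s u) =
   \sum_(i <- s) \sum_(q < rd i) F (Some (i, val q)))%N.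
Proof.
elim: s => [|i s IH]; first by rewrite big_nil big_ord0.
rewrite big_cons -IH /= big_split_ord /=; congr (_ + _)%N.
  by apply: eq_bigr => u _; rewrite /= ltn_ord.
by apply: eq_bigr => u _; rewrite /= ltnNge leq_addr /= addKn.
Qed.

Lemma bdiag_pos_lt s u a q : bdiag_pos s u = Some (a, q) -> (q < rd a)%N.
Proof.
elim: s u => [|i s IH] u //=; case: ifP => [lt [<- <-] // | _]; exact: IH.
Qed.

Lemma bdiag_pos_total s (u : 'I_(sumn (map rd s))) :
  exists a q, bdiag_pos s u = Some (a, q).
Proof.
elim: s u => [|i s IH] u; first by case: u.
case: (splitP u) => [u1 | u2] /= ->; first by exists i, u1; rewrite ltn_ord.
by rewrite ltnNge leq_addr /= addKn; apply: IH.
Qed.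

Lemma mxtrace_bdiag h s : \tr (bdiag (rm h) s) = \sum_(i <- s) \tr (rm h i).
Proof.
elim: s => [|i s IH]; first by rewrite big_nil /= mxtrace0.
by rewrite big_cons /= mxtrace_block IH.
Qed.

Lemma bdiag_block_col m s (P : gT -> 'M[algC]_m) (M : 'M[algC]_(m, sumn (map rd s))) :
  (forall h, h \in H -> P h *m M = M *m bdiag (rm h) s) ->
  forall (u : 'I_(sumn (map rd s))) a q, bdiag_pos s u = Some (a, q) ->
  exists W : 'M[algC]_(m, rd a),
    [/\ (W^T <= M^T)%MS, forall h, h \in H -> P h *m W = W *m rm h a &
    exists2 q' : 'I_(rd a), val q' = q & col q' W = col u M].
Proof.
elim: s M => [|i s IH] M hM u a q; first by case: u.
rewrite -[M]hsubmxK in hM *.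
have [hMl hMr] : (forall h, h \in H -> P h *m lsubmx M = lsubmx M *m rm h i) /\
                 (forall h, h \in H -> P h *m rsubmx M = rsubmx M *m bdiag (rm h) s).
  split=> h Hh; have := hM h Hh; rewrite /= mul_mx_row mul_row_block !mulmx0.
    by case/eq_row_mx; rewrite addr0.
  by case/eq_row_mx => _; rewrite add0r.
case: (splitP u) => [u1 | u2] /= eu; rewrite eu.
  have -> : u = lshift _ u1 by apply/val_inj.
  rewrite ltn_ord => -[<- <-]; exists (lsubmx M); split => //.
    by rewrite tr_row_mx -addsmxE addsmxSl.
  by exists u1 => //; apply/colP => x; rewrite [LHS]mxE [RHS]mxE row_mxEl.
have -> : u = rshift _ u2 by apply/val_inj.
rewrite ltnNge leq_addr /= addKn => /(IH _ hMr) [W [sWM hW [q' eq' cW]]].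
exists W; split => //.
  by rewrite (submx_trans sWM) // tr_row_mx -addsmxE addsmxSr.
by exists q' => //; rewrite cW; apply/colP => x; rewrite [LHS]mxE [RHS]mxE row_mxEr.
Qed.

Hypothesis R_irr : forall i : 'I_(size R), mx_irreducible (projT2 (rep_at i)).
Hypothesis R_inequiv : forall i j : 'I_(size R), i != j ->
  ~ mx_rsim (projT2 (rep_at i)) (projT2 (rep_at j)).

(* Schur's lemma, applied block by block. *)
Lemma bdiag_intertwiner_support s a (N : 'M[algC]_(sumn (map rd s), rd a)) :
  (forall h, h \in H -> bdiag (rm h) s *m N = N *m rm h a) ->
  forall (u : 'I_(sumn (map rd s))) (q : 'I_(rd a)), N u q != 0 ->
  bdiag_pos s u = Some (a, val q).
Proof.
elim: s N => [|i s IH] N hN u q; first by case: u.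
rewrite -[N]vsubmxK in hN *.
have [hNu hNd] : (forall h, h \in H -> rm h i *m usubmx N = usubmx N *m rm h a) /\
     (forall h, h \in H -> bdiag (rm h) s *m dsubmx N = dsubmx N *m rm h a).
  split=> h Hh; have := hN h Hh; rewrite /= mul_block_col mul_col_mx !mul0mx.
    by case/eq_col_mx; rewrite addr0.
  by case/eq_col_mx => _; rewrite add0r.
case: (splitP u) => [u1 | u2] /= eu; rewrite eu.
  have -> : u = lshift _ u1 by apply/val_inj.
  rewrite col_mxEu ltn_ord => nzN.
  have nzNu : usubmx N != 0 by apply: contraNneq nzN => ->; rewrite mxE.
  have eia : i = a.
    apply/eqP; apply/negPn/negP => /R_inequiv; apply.
    exact: mx_irr_intertwiner_rsim (R_irr i) (R_irr a) hNu nzNu.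
  subst a; have [c hc] := mx_irr_cent_scalar (R_irr i) hNu.
  by move: nzN; rewrite hc mxE; case: (u1 =P q) => [-> | _]; rewrite ?mulr0n ?eqxx.
have -> : u = rshift _ u2 by apply/val_inj.
rewrite col_mxEd ltnNge leq_addr /= addKn; exact: IH.
Qed.

Lemma cfdot_cfRepr_at (i b : 'I_(size R)) :
  '[cfRepr (projT2 (rep_at i)), cfRepr (projT2 (rep_at b))] = (i == b)%:R.
Proof.
have irrR (j : 'I_(size R)) : cfRepr (projT2 (rep_at j)) \in irr H.
  by apply/irr_reprP; exists (Representation (projT2 (rep_at j))); [exact: R_irr|].
have [i' ei] := irrP (irrR i); have [b' eb] := irrP (irrR b).
rewrite ei eb cfdot_irr; congr (_%:R).
case: (i' =P b') => [e|ne]; case: (i =P b) => [e'|ne'] //.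
  case: ne'; apply/eqP; apply/negPn/negP => /R_inequiv; apply; apply: cfRepr_inj.
  by rewrite ei eb e.
by case: ne; apply: irr_inj; rewrite -ei -eb e'.
Qed.

Lemma bdiag_count_eq p s1 s2 (P : gT -> 'M[algC]_p)
    (V1 : 'M[algC]_(p, sumn (map rd s1))) (V2 : 'M[algC]_(p, sumn (map rd s2))) :
  row_free V1^T -> row_free V2^T -> (V1^T == V2^T)%MS ->
  (forall h, h \in H -> P h *m V1 = V1 *m bdiag (rm h) s1) ->
  (forall h, h \in H -> P h *m V2 = V2 *m bdiag (rm h) s2) ->
  forall b, count_mem b s1 = count_mem b s2.
Proof.
move=> free1 free2 eqV hV1 hV2 b.
have cnt s : '[\sum_(i <- s) cfRepr (projT2 (rep_at i)), cfRepr (projT2 (rep_at b))]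
    = (count_mem b s)%:R.
  elim: s => [|i s IH]; first by rewrite big_nil cfdot0l.
  by rewrite big_cons cfdotDl IH cfdot_cfRepr_at /= natrD.
have eq_cf : \sum_(i <- s1) cfRepr (projT2 (rep_at i)) =
             \sum_(i <- s2) cfRepr (projT2 (rep_at i)).
  apply/cfun_inP => x Hx; rewrite !sum_cfunE.
  under eq_bigr do rewrite cfunE Hx mulr1n.
  under [RHS]eq_bigr do rewrite cfunE Hx mulr1n.
  have := eqmx_intertwined_mxtrace free1 free2 eqV (hV1 x Hx) (hV2 x Hx).
  by rewrite !mxtrace_bdiag.
by apply/eqP; rewrite -(eqr_nat algC) -!cnt eq_cf.
Qed.
End BlockPattern.

Lemma unitmx_col_neq0 (F : fieldType) n (B : 'M[F]_n) k : B \in unitmx -> col k B != 0.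
Proof.
move=> uB; apply/eqP => Bk0.
have : col k (invmx B *m B) = 0 by rewrite colE -mulmxA -colE Bk0 mulmx0.
by rewrite mulVmx // => /colP /(_ k); rewrite !mxE eqxx => /eqP; rewrite oner_eq0.
Qed.

Lemma col_mulmx (F : fieldType) m n p (A : 'M[F]_(m, n)) (B : 'M[F]_(n, p)) j :
  col j (A *m B) = A *m col j B.
Proof. by rewrite !colE mulmxA. Qed.

Lemma col_neq0_nz_entry (F : fieldType) n (v : 'cV[F]_n) : v != 0 -> exists i, v i 0 != 0.
Proof.
move=> nzv; apply/existsP; apply: contraR nzv => /existsPn v0.
by apply/eqP/colP => i; rewrite mxE; apply/eqP; move: (v0 i); rewrite negbK.
Qed.

Lemma mxrank_le_nz_rows (F : fieldType) m n (A : 'M[F]_(m, n)) (J : {set 'I_m}) :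
  (forall k l, A k l != 0 -> k \in J) -> (\rank A <= #|J|)%N.
Proof.
move=> suppA; pose S : 'M[F]_(#|J|, m) := rowsub enum_val 1%:M.
suff -> : A = S^T *m (S *m A) by rewrite (leq_trans (mxrankM_maxl _ _)) ?rank_leq_col.
apply/matrixP => k l; rewrite mul_rowsub_mx mul1mx mxE.
case: (boolP (k \in J)) => kJ.
  rewrite (bigD1 (enum_rank_in kJ k)) //= big1 ?addr0 => [|r ne_r].
    by rewrite !mxE enum_rankK_in // eqxx mul1r.
  rewrite !mxE; case: (enum_val r =P k) => [ek|]; last by rewrite mul0r.
  by have := enum_valK_in kJ r; rewrite ek => erk; rewrite erk eqxx in ne_r.
rewrite big1 => [|r _]; last first.
  rewrite !mxE; case: (enum_val r =P k) => [ek|]; last by rewrite mul0r.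
  by rewrite -ek enum_valP in kJ.
by apply/eqP; apply: contraNT kJ => /suppA.
Qed.

(* The #|P| independent columns indexed by P live in the #|J|-dimensional
   coordinate space on J. *)
Lemma card_le_unitmx_support (F : fieldType) n (C : 'M[F]_n) (P J : {set 'I_n}) :
  C \in unitmx -> (forall k l, l \in P -> C k l != 0 -> k \in J) -> (#|P| <= #|J|)%N.
Proof.
move=> uC suppC; pose S : 'M[F]_(n, #|P|) := colsub enum_val 1%:M.
have SK : S^T *m S = 1%:M.
  apply/matrixP => r r'; rewrite mxE (bigD1 (enum_val r)) //= big1 ?addr0.
    by rewrite !mxE eqxx mul1r (inj_eq enum_val_inj).
  by move=> k ne_k; rewrite !mxE (negbTE ne_k) mul0r.
have rankS : \rank S = #|P|.
  by apply/eqP; rewrite eqn_leq rank_leq_col -{1}(mxrank1 F #|P|) -SK mxrankM_maxr.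
have rankCS : (\rank S <= \rank (C *m S))%N.
  by have := mxrankM_maxr (invmx C) (C *m S); rewrite mulKmx.
rewrite -rankS (leq_trans rankCS) // mxrank_le_nz_rows // => k r.
by rewrite mulmx_colsub mulmx1 mxE; apply: suppC; apply: enum_valP.
Qed.

Lemma nu_sum_col_nnz m n (A : 'M[algC]_(m, n)) : nu A = (\sum_l col_nnz A l)%N.
Proof.
rewrite /nu /col_nnz -sum1dep_card big_mkcond.
rewrite -(pair_big xpredT xpredT (fun i l => if A i l != 0%R then 1%N else 0%N)) /=.
by rewrite exchange_big; apply: eq_bigr => l _; rewrite -sum1dep_card [RHS]big_mkcond.
Qed.

Lemma sum_seq_count N (s : seq 'I_N) (F : 'I_N -> nat) :
  (\sum_(i <- s) F i = \sum_(a < N) count_mem a s * F a)%N.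
Proof.
elim: s => [|x s IH]; first by rewrite big_nil big1.
rewrite big_cons IH /=.
under [RHS]eq_bigr do rewrite mulnDl.
rewrite big_split /=; congr (_ + _)%N.
rewrite (bigD1 x) //= eqxx mul1n big1 ?addn0 // => a ne_a.
by rewrite eq_sym (negbTE ne_a).
Qed.

Lemma count_flatten_nseq N (kap : 'I_N -> nat) a :
  count_mem a (flatten [seq nseq (kap i) i | i <- enum 'I_N]) = kap a.
Proof.
rewrite count_flatten -map_comp sumnE big_map big_enum /= (bigD1 a) //=.
rewrite count_nseq /= eqxx mul1n big1 ?addn0 // => i ne_i.
by rewrite count_nseq /= (negbTE ne_i).
Qed.

Section Orbits.
Variables (gT : finGroupType) (T : finType) (to : {action gT &-> T}).
Local Notation nT := #|T|.

Lemma orbits_eq_mem (L : {group gT}) Y1 Y2 x :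
  Y1 \in orbits to L -> Y2 \in orbits to L -> x \in Y1 -> x \in Y2 -> Y1 = Y2.
Proof.
move=> /imsetP [y1 _ ->] /imsetP [y2 _ ->] x_y1 x_y2.
by rewrite -(orbit_eqP x_y1) -(orbit_eqP x_y2).
Qed.

Lemma supported_orbit_eq (L : {group gT}) Y1 Y2 (v : 'cV[algC]_nT) :
  Y1 \in orbits to L -> Y2 \in orbits to L ->
  supported_in Y1 v -> supported_in Y2 v -> v != 0 -> Y1 = Y2.
Proof.
move=> oY1 oY2 /forallP sY1 /forallP sY2 /col_neq0_nz_entry [i nz_i].
exact: orbits_eq_mem oY1 oY2 (implyP (sY1 i) nz_i) (implyP (sY2 i) nz_i).
Qed.

Lemma supported_in_subset (Y1 Y2 : {set T}) (v : 'cV[algC]_nT) :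
  Y1 \subset Y2 -> supported_in Y1 v -> supported_in Y2 v.
Proof.
move=> sY12 /forallP sY1; apply/forallP => i; apply/implyP => nz_i.
exact: subsetP sY12 _ (implyP (sY1 i) nz_i).
Qed.

Lemma CYmx_subset (Y1 Y2 : {set T}) : Y1 \subset Y2 -> (CYmx Y1 <= CYmx Y2)%MS.
Proof.
move=> sY12; suff -> : CYmx Y1 = CYmx Y1 *m CYmx Y2 by apply: submxMl.
apply/matrixP => i j; rewrite [RHS]mxE (bigD1 j) //= big1 ?addr0 => [|k ne_k].
  rewrite !mxE eqxx /=; case: (i =P j) => [->|] /=; last by rewrite !mul0r.
  by case: (boolP (enum_val j \in Y1)) => Y1j; rewrite ?mul0r // (subsetP sY12 _ Y1j) mul1r.
by rewrite !mxE (negbTE ne_k) /= mulr0.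
Qed.

Lemma mem_cols_in (B : 'M[algC]_nT) Y k : (k \in cols_in B Y) = supported_in Y (col k B).
Proof. by rewrite mem_filter mem_enum andbT. Qed.

Lemma uniq_cols_in (B : 'M[algC]_nT) Y : uniq (cols_in B Y).
Proof. exact/filter_uniq/enum_uniq. Qed.

Definition orbit_of_col (L : {group gT}) (B : 'M[algC]_nT) k :=
  odflt set0 [pick Y in orbits to L | supported_in Y (col k B)].

Lemma orbit_of_colP (L : {group gT}) (B : 'M[algC]_nT) k :
  (exists2 Y, Y \in orbits to L & supported_in Y (col k B)) ->
  orbit_of_col L B k \in orbits to L /\ supported_in (orbit_of_col L B k) (col k B).
Proof.
move=> [Y oY sY]; rewrite /orbit_of_col; case: pickP => [Y' /andP [] //|].
by move/(_ Y); rewrite oY sY.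
Qed.

End Orbits.

Definition adapted_pattern (gT : finGroupType) (T : finType) (to : {action gT &-> T})
    (H : {group gT}) (R : seq (repT H)) (s : seq 'I_(size R)) m
    (V : 'M[algC]_(#|T|, m)) : Prop :=
  exists e : sumn (map (@rdim _ H R) s) = m, forall g, g \in H ->
    permmx to g *m V = V *m castmx (e, e) (bdiag (@rmat _ H R g) s).
Arguments adapted_pattern {gT T} to {H} R s {m} V.

Section OrbitalBasis.
Variables (gT : finGroupType) (T : finType) (to : {action gT &-> T}).
Variables (H L : {group gT}) (R : seq (repT H)) (B : 'M[algC]_#|T|).
Variable pat : {set T} -> seq 'I_(size R).
Local Notation nT := #|T|.
Local Notation rd := (@rdim _ H R).
Local Notation rm := (@rmat _ H R).

Lemma adapted_pattern_uncast s m (V : 'M[algC]_(nT, m)) : adapted_pattern to R s V ->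
  exists M : 'M[algC]_(nT, sumn (map rd s)),
    [/\ forall g, g \in H -> permmx to g *m M = M *m bdiag (rm g) s,
        (M^T == V^T)%MS, row_free M^T = row_free V^T &
        exists e : sumn (map rd s) = m, forall u, col u M = col (cast_ord e u) V].
Proof.
case=> e; case: m / e V => V hV; exists V; split.
- by move=> g Hg; rewrite hV // castmx_id.
- by rewrite submx_refl.
- by [].
- by exists erefl => u; rewrite cast_ord_id.
Qed.

Hypothesis B_unit : B \in unitmx.
Hypothesis B_orbital : forall k, exists2 Y, Y \in orbits to L & supported_in Y (col k B).
Hypothesis B_basis : forall Y, Y \in orbits to L -> basis_of_CY Y (sub_basis B Y).
Hypothesis B_adapted : forall Y, Y \in orbits to L -> adapted_pattern to R (pat Y) (sub_basis B Y).

Lemma mem_cols_in_orbit Y k :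
  Y \in orbits to L -> (k \in cols_in B Y) = (orbit_of_col to L B k == Y).
Proof.
move=> oY; have [oYk sYk] := orbit_of_colP (B_orbital k); rewrite mem_cols_in.
apply/idP/eqP => [sY | <- //].
exact: supported_orbit_eq oYk oY sYk sY (unitmx_col_neq0 k B_unit).
Qed.

Definition col_pos k :=
  let Y := orbit_of_col to L B k in bdiag_pos (pat Y) (index k (cols_in B Y)).

Lemma pattern_basis Y : Y \in orbits to L ->
  exists M : 'M[algC]_(nT, sumn (map rd (pat Y))),
    [/\ forall g, g \in H -> permmx to g *m M = M *m bdiag (rm g) (pat Y),
        row_free M^T, (M^T == CYmx Y)%MS,
        forall k u, (invmx B *m M) k u != 0 ->
          k \in cols_in B Y /\ index k (cols_in B Y) = u &
        forall l, l \in cols_in B Y -> exists2 u : 'I_(sumn (map rd (pat Y))),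
          val u = index l (cols_in B Y) & col u M = col l B].
Proof.
move=> oY; have [M [hM eMV freeM [e colM]]] := adapted_pattern_uncast (B_adapted oY).
have /andP [freeV eVY] := B_basis oY.
pose t u := tnth (in_tuple (cols_in B Y)) (cast_ord e u).
have colMt u : col u M = col (t u) B by rewrite colM; apply/colP => i; rewrite !mxE.
have index_t u : index (t u) (cols_in B Y) = u.
  by rewrite /t (tnth_nth (t u)) index_uniq ?uniq_cols_in.
have selM : invmx B *m M = colsub t 1%:M.
  apply: (canLR (mulKmx B_unit)); rewrite mulmx_colsub mulmx1.
  by apply/matrixP => i u; have /colP/(_ i) := colMt u; rewrite !mxE.
exists M; split => //.
- by rewrite freeM.
- exact/eqmxP/(eqmx_trans (eqmxP eMV) (eqmxP eVY)).
- move=> k u; rewrite selM !mxE; case: (k =P t u) => [-> _|]; last by rewrite eqxx.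
  by rewrite mem_tnth index_t.
move=> l l_in; have lt_l : (index l (cols_in B Y) < size (cols_in B Y))%N.
  by rewrite index_mem.
exists (cast_ord (esym e) (Ordinal lt_l)) => //.
rewrite colMt /t cast_ordKV; congr col; apply: val_inj.
by rewrite /= (tnth_nth l) /= nth_index.
Qed.

Lemma sum_col_pos Y (F : option ('I_(size R) * nat) -> nat) : Y \in orbits to L ->
  (\sum_(k | orbit_of_col to L B k == Y) F (col_pos k) =
   \sum_(i <- pat Y) \sum_(q < rd i) F (Some (i, val q)))%N.
Proof.
move=> oY; have [e _] := B_adapted oY; rewrite -sum_bdiag_pos.
rewrite (eq_bigr (fun k => F (bdiag_pos (pat Y) (index k (cols_in B Y))))); last first.
  by move=> k /eqP Yk; rewrite /col_pos Yk.
rewrite (eq_bigl (mem (cols_in B Y))) => [|k]; last by rewrite /= mem_cols_in_orbit.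
rewrite -big_uniq ?uniq_cols_in // big_tnth e.
by apply: eq_bigr => u _; rewrite (tnth_nth (tnth (in_tuple _) u)) index_uniq ?uniq_cols_in.
Qed.

Lemma col_pos_total k : exists a (q : 'I_(rd a)), col_pos k = Some (a, val q).
Proof.
have [oY _] := orbit_of_colP (B_orbital k); set Y := orbit_of_col to L B k in oY *.
have [e _] := B_adapted oY.
have lt_k : (index k (cols_in B Y) < sumn (map rd (pat Y)))%N.
  by rewrite e index_mem mem_cols_in_orbit.
have [a [q pos_k]] := bdiag_pos_total (Ordinal lt_k).
by exists a, (Ordinal (bdiag_pos_lt pos_k)).
Qed.

Lemma col_in_irr_copy l : exists a (q : 'I_(rd a)) (W : 'M[algC]_(nT, rd a)),
  [/\ col_pos l = Some (a, val q),
      forall h, h \in H -> permmx to h *m W = W *m rm h a,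
      (W^T <= CYmx (orbit_of_col to L B l))%MS & col q W = col l B].
Proof.
have [oY _] := orbit_of_colP (B_orbital l); set Y := orbit_of_col to L B l in oY *.
have l_in : l \in cols_in B Y by rewrite mem_cols_in_orbit.
have [M [hM _ /andP [sMY _] _ colM]] := pattern_basis oY.
have [u idx_u colMu] := colM l l_in.
have [a [q0 pos_u]] := bdiag_pos_total u.
have [W [sWM hW [q eq_q colWq]]] := bdiag_block_col hM pos_u.
exists a, q, W; split => //.
- by rewrite /col_pos -/Y -idx_u pos_u eq_q.
- exact: submx_trans sWM sMY.
- by rewrite colWq colMu.
Qed.

Hypothesis R_irr : forall i : 'I_(size R), mx_irreducible (projT2 (rep_at i)).
Hypothesis R_inequiv : forall i j : 'I_(size R), i != j ->
  ~ mx_rsim (projT2 (rep_at i)) (projT2 (rep_at j)).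

Lemma invmx_irr_copy_support Y a (W : 'M[algC]_(nT, rd a)) (q : 'I_(rd a)) k :
  Y \in orbits to L -> (forall h, h \in H -> permmx to h *m W = W *m rm h a) ->
  (W^T <= CYmx Y)%MS -> (invmx B *m col q W) k 0 != 0 ->
  orbit_of_col to L B k = Y /\ col_pos k = Some (a, val q).
Proof.
move=> oY hW sWY; have [M [hM freeM /andP [_ sYM] selM _]] := pattern_basis oY.
have [N eN] := submxP (submx_trans sWY sYM).
have eWM : W = M *m N^T by rewrite -[W]trmxK eN trmx_mul trmxK.
have hN h : h \in H -> bdiag (rm h) (pat Y) *m N^T = N^T *m rm h a.
  move=> Hh; apply: trmx_inj; apply: (row_free_inj freeM); rewrite -!trmx_mul.
  by congr trmx; rewrite mulmxA -hM // -mulmxA -eWM hW // eWM mulmxA.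
rewrite eWM colE -!mulmxA -colE mulmxA mxE => nz_sum.
have [u /andP [nz_ku nz_uq]] : exists u, ((invmx B *m M) k u != 0) && (N^T u q != 0).
  apply/existsP; apply: contraR nz_sum => /existsPn nz0.
  apply/eqP/big1 => u _; rewrite [col _ _ _ _]mxE.
  by move: (nz0 u); rewrite negb_and !negbK => /orP [] /eqP ->; rewrite ?mul0r ?mulr0.
have [k_in idx_k] := selM k u nz_ku.
split; first by apply/eqP; rewrite -mem_cols_in_orbit.
rewrite /col_pos; have /eqP -> : orbit_of_col to L B k == Y by rewrite -mem_cols_in_orbit.
by rewrite idx_k (bdiag_intertwiner_support R_irr R_inequiv hN nz_uq).
Qed.

Lemma count_pattern Y kapY :
  Y \in orbits to L -> is_mult to Y kapY -> forall a, count_mem a (pat Y) = kapY a.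
Proof.
move=> oY [V [/andP [freeV eVY] hV]]; have [M [hM freeM eMY _ _]] := pattern_basis oY.
move=> a; rewrite -(count_flatten_nseq kapY a).
apply: (bdiag_count_eq R_irr R_inequiv freeM freeV _ hM hV).
exact/eqmxP/(eqmx_trans (eqmxP eMY) (eqmx_sym (eqmxP eVY))).
Qed.

End OrbitalBasis.

Lemma sum_card_rel (I J : finType) (r : I -> J -> bool) :
  (\sum_j #|[set i | r i j]| = \sum_i #|[set j | r i j]|)%N.
Proof.
under eq_bigr do rewrite -sum1dep_card big_mkcond.
by rewrite exchange_big; apply: eq_bigr => i _; rewrite -sum1dep_card [RHS]big_mkcond.
Qed.

Lemma orbit_sub_orbits (gT : finGroupType) (T : finType) (to : {action gT &-> T})
    (H K : {group gT}) Y :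
  H \subset K -> Y \in orbits to H -> exists2 Z, Z \in orbits to K & Y \subset Z.
Proof.
move=> sHK /imsetP [x _ ->]; exists (orbit to K x); first exact: imset_f.
exact: imsetS.
Qed.

Section ChangeOfBasis.
Variables (gT : finGroupType) (T : finType) (to : {action gT &-> T}).
Variables (H K : {group gT}) (R : seq (repT H)) (B B' : 'M[algC]_#|T|).
Variables (pat pat' : {set T} -> seq 'I_(size R)) (kap : {set T} -> 'I_(size R) -> nat).

Hypothesis sHK : H \subset K.
Hypothesis R_irr : forall i : 'I_(size R), mx_irreducible (projT2 (rep_at i)).
Hypothesis R_inequiv : forall i j : 'I_(size R), i != j ->
  ~ mx_rsim (projT2 (rep_at i)) (projT2 (rep_at j)).
Hypotheses (B_unit : B \in unitmx) (B'_unit : B' \in unitmx).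
Hypothesis B_orbital : forall k, exists2 Y, Y \in orbits to K & supported_in Y (col k B).
Hypothesis B'_orbital : forall l, exists2 Y, Y \in orbits to H & supported_in Y (col l B').
Hypothesis B_basis : forall Y, Y \in orbits to K -> basis_of_CY Y (sub_basis B Y).
Hypothesis B'_basis : forall Y, Y \in orbits to H -> basis_of_CY Y (sub_basis B' Y).
Hypothesis B_adapted :
  forall Y, Y \in orbits to K -> adapted_pattern to R (pat Y) (sub_basis B Y).
Hypothesis B'_adapted :
  forall Y, Y \in orbits to H -> adapted_pattern to R (pat' Y) (sub_basis B' Y).
Hypothesis kap_mult : forall Y, Y \in orbits to K -> is_mult to Y (kap Y).

Local Notation C := (invmx B *m B').

Lemma B'_orbital_K l : exists2 Y, Y \in orbits to K & supported_in Y (col l B').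
Proof.
have [Y' oY' sY'] := B'_orbital l; have [Y oY sY'Y] := orbit_sub_orbits sHK oY'.
by exists Y; last exact: supported_in_subset sY'.
Qed.

Lemma orbit_of_col_subset l : orbit_of_col to H B' l \subset orbit_of_col to K B' l.
Proof.
have [oY' sY'] := orbit_of_colP (B'_orbital l); have [oY sY] := orbit_of_colP (B'_orbital_K l).
have [Z oZ sY'Z] := orbit_sub_orbits sHK oY'.
rewrite (supported_orbit_eq oY oZ sY (supported_in_subset sY'Z sY')) //.
exact: unitmx_col_neq0.
Qed.

Definition col_type k := (orbit_of_col to K B k, col_pos to K B pat k).
Definition col_type' l := (orbit_of_col to K B' l, col_pos to H B' pat' l).

Lemma chg_nz_type k l : C k l != 0 -> col_type k = col_type' l.
Proof.
have [a [q [W [pos_l hW sWY' colWq]]]] :=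
  col_in_irr_copy B'_unit B'_orbital B'_basis B'_adapted l.
have sWY := submx_trans sWY' (CYmx_subset (orbit_of_col_subset l)).
have [oY _] := orbit_of_colP (B'_orbital_K l).
have -> : C k l = (invmx B *m col q W) k 0 by rewrite colWq -col_mulmx [RHS]mxE.
move/(invmx_irr_copy_support B_unit B_orbital B_basis B_adapted R_irr R_inequiv oY hW sWY).
by case=> Yk pos_k; rewrite /col_type /col_type' Yk pos_k pos_l.
Qed.

Lemma chg_unit : C \in unitmx.
Proof. by rewrite unitmx_mul unitmx_inv B_unit B'_unit. Qed.

Definition type_mult (t : {set T} * option ('I_(size R) * nat)) : nat :=
  let: (Y, pos) := t in if pos is Some (a, _) then kap Y a else 0.

Lemma card_col_type k :
  #|[set k' | col_type k' == col_type k]| = type_mult (col_type k).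
Proof.
have [oY _] := orbit_of_colP (B_orbital k); set Y := orbit_of_col to K B k in oY *.
have [a [q pos_k]] := col_pos_total B_unit B_orbital B_adapted k.
rewrite /type_mult /col_type -/Y pos_k -sum1dep_card.
rewrite (eq_bigl (fun k' => (orbit_of_col to K B k' == Y) &&
                            (col_pos to K B pat k' == Some (a, val q)))) => [|k'].
  rewrite big_mkcondr (sum_col_pos B_unit B_orbital B_adapted
    (fun pos => if pos == Some (a, val q) then 1%N else 0%N) oY).
  rewrite sum_seq_count (bigD1 a) //= [X in (_ + X)%N]big1 ?addn0 => [|b ne_b].
    rewrite (bigD1 q) //= eqxx big1 ?addn0 ?muln1 => [|q' ne_q'].
      exact: (count_pattern B_unit B_basis B_adapted R_irr R_inequiv oY (kap_mult oY) a).
    by case: eqP => // -[/val_inj eq_q]; rewrite eq_q eqxx in ne_q'.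
  by rewrite big1 ?muln0 // => q' _; case: eqP => // -[eq_b]; rewrite eq_b eqxx in ne_b.
by rewrite /col_type xpair_eqE.
Qed.

Lemma type_mult_le_KX k : (type_mult (col_type k) <= KX to K kap)%N.
Proof.
have [oY _] := orbit_of_colP (B_orbital k).
have [a [q pos_k]] := col_pos_total B_unit B_orbital B_adapted k.
rewrite /type_mult /col_type pos_k.
by apply: (bigmax_sup (orbit_of_col to K B k)) => //; apply: (bigmax_sup a).
Qed.

Lemma sum_type_mult : (\sum_k type_mult (col_type k) = PhiX to K kap)%N.
Proof.
rewrite (partition_big (orbit_of_col to K B) (mem (orbits to K))) /= => [|k _]; last first.
  by have [] := orbit_of_colP (B_orbital k).
apply: eq_bigr => Y oY.
pose mult (pos : option ('I_(size R) * nat)) :=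
  if pos is Some (a, _) then kap Y a else 0%N.
rewrite (eq_bigr (fun k => mult (col_pos to K B pat k))) => [|k /eqP Yk]; last first.
  by rewrite /col_type Yk.
rewrite (sum_col_pos B_unit B_orbital B_adapted mult oY) /= sum_seq_count.
apply: eq_bigr => a _; rewrite sum_nat_const card_ord.
rewrite (count_pattern B_unit B_basis B_adapted R_irr R_inequiv oY (kap_mult oY)).
by rewrite mulnCA mulnn mulnC.
Qed.

Lemma col_nnz_le_card_type l :
  (col_nnz C l <= #|[set k | col_type k == col_type' l]|)%N.
Proof.
by apply/subset_leq_card/subsetP => k; rewrite !inE => /chg_nz_type ->.
Qed.

Lemma col_nnz_chg_le_KX l : (col_nnz C l <= KX to K kap)%N.
Proof.
have [k nz_k] := col_neq0_nz_entry (unitmx_col_neq0 l chg_unit); rewrite mxE in nz_k.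
rewrite (leq_trans (col_nnz_le_card_type l)) // -(chg_nz_type nz_k).
by rewrite card_col_type type_mult_le_KX.
Qed.

Lemma nu_chg_le_PhiX : (nu C <= PhiX to K kap)%N.
Proof.
rewrite nu_sum_col_nnz -sum_type_mult.
have le_types : (\sum_l col_nnz C l <= \sum_l #|[set k | col_type k == col_type' l]|)%N.
  by apply: leq_sum => l _; apply: col_nnz_le_card_type.
rewrite (leq_trans le_types) // (sum_card_rel (fun k l => col_type k == col_type' l)).
apply: leq_sum => k _; rewrite -card_col_type.
apply: card_le_unitmx_support chg_unit _ => k' l; rewrite !inE => /eqP tk /chg_nz_type.
by rewrite tk => ->.
Qed.

Lemma chg_nnz_bounds :
  [/\ (nu C <= PhiX to K kap)%N, (forall l, col_nnz C l <= KX to K kap)%N &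
      (nu C <= KX to K kap * #|T|)%N].
Proof.
split; [exact: nu_chg_le_PhiX | exact: col_nnz_chg_le_KX |].
have le_KX : (\sum_l col_nnz C l <= \sum_(l < #|T|) KX to K kap)%N.
  by apply: leq_sum => l _; apply: col_nnz_chg_le_KX.
by rewrite nu_sum_col_nnz (leq_trans le_KX) // sum_nat_const card_ord mulnC.
Qed.

End ChangeOfBasis.

Lemma orbital_sab_patterns (gT : finGroupType) (T : finType) (to : {action gT &-> T})
    (Gs : nat -> {group gT}) (Rs : forall i, seq (repT (Gs i))) i j (B : 'M[algC]_#|T|) :
  (1 <= i <= j)%N -> orbital_sab to Rs j B ->
  exists pat : {set T} -> seq 'I_(size (Rs i)), forall Y, Y \in orbits to (Gs j) ->
    adapted_pattern to (Rs i) (pat Y) (sub_basis B Y).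
Proof.
move=> ij [_ _ sabB].
apply: (@fin_all_exists _ (fun=> seq 'I_(size (Rs i)))
  (fun Y s => Y \in orbits to (Gs j) -> adapted_pattern to (Rs i) s (sub_basis B Y))) => Y.
have [oY|_] := boolP (Y \in orbits to (Gs j)); last by exists [::].
by have [_ /(_ i ij) [s adapted_s]] := sabB Y oY; exists s.
Qed.

Unset Implicit Arguments.
Set Strict Implicit.

Theorem theorem3 (gT : finGroupType) (T : finType) (to : {action gT &-> T})
  (n : nat) (Gs : nat -> {group gT})
  (Rs : forall i : nat, seq (repT (Gs i)))
  (Bs : nat -> 'M[algC]_#|T|) :
  Gs 1%N = 1%G ->
  (forall i, (1 <= i < n)%N -> Gs i \proper Gs i.+1) ->
  (forall i, (1 <= i <= n)%N -> complete_irr_set (Rs i)) ->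
  (exists B : 'M[algC]_#|T|, B \in unitmx /\
     forall i, (1 <= i <= n)%N -> sym_adapted to (Rs i) B) ->
  (forall j, (1 <= j <= n)%N -> orbital_sab to Rs j (Bs j)) ->
  Bs 1%N = 1%:M ->
  forall j, (2 <= j <= n)%N ->
  forall kap : {set T} -> 'I_(size (Rs j.-1)) -> nat,
  (forall Y, Y \in orbits to (Gs j) -> is_mult to Y (kap Y)) ->
  let C := chg (Bs j) (Bs j.-1) in
  [/\ (nu C <= PhiX to (Gs j) kap)%N,
      (forall k, col_nnz C k <= KX to (Gs j) kap)%N &
      (nu C <= KX to (Gs j) kap * #|T|)%N].
Proof.
move=> _ chain complete _ sab _ [|[|i]] // /andP [_ le_i2n] kap kap_mult C.
have le_i1n : (1 <= i.+1 <= n)%N by exact: ltnW le_i2n.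
have sHK : Gs i.+1 \subset Gs i.+2 by apply/proper_sub/chain.
have [R_irr R_inequiv _] := complete i.+1 le_i1n.
have [B_unit B_orbital B_sab] := sab i.+2 le_i2n.
have [B'_unit B'_orbital B'_sab] := sab i.+1 le_i1n.
have [pat B_adapted] := orbital_sab_patterns (i := i.+1) (leqnSn i.+1) (sab i.+2 le_i2n).
have [pat' B'_adapted] := orbital_sab_patterns (i := i.+1) (leqnn i.+1) (sab i.+1 le_i1n).
apply: (chg_nnz_bounds sHK R_irr R_inequiv B_unit B'_unit B_orbital B'_orbital _ _
          B_adapted B'_adapted kap_mult).
- by move=> Y /B_sab [].
- by move=> Y /B'_sab [].
Qed.
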